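(* Let $A,B,C$ be real random variables on a common probability space with finite second moments, $\mathrm{Var}(B)>0$, $\mathbb{E}[A]\neq0$, $\mathbb{E}[C]\neq 0$, and set $R=\mathbb{E}[A]/\mathbb{E}[C]$. Let $n\ge1$ and let $(A_i,B_i,C_i)_{i=1,\dots,n}$ be i.i.d. copies of $(A,B,C)$. For $\alpha\in\mathbb{R}$ put $N_\alpha=\overline{A_n}+\alpha(\mathbb{E}[B]-\overline{B_n})$. Then the function $\alpha\mapsto\Phi(N_\alpha,\overline{C_n})$ has a unique minimizer on $\mathbb{R}$, namely $$\alpha_o'=\frac{\mathrm{Cov}(A,B)-R\,\mathrm{Cov}(B,C)}{\mathrm{Var}(B)}.$$
   Context: For a random variable $X$, $\overline{X_n}=\frac1n\sum_{i=1}^n X_i$ denotes the sample mean of the i.i.d. copies $X_1,\dots,X_n$. For real random variables $X,Z$ with finite second moments and $\mathbb{E}[Z]\neq0$, define the first-order (delta-method) approximation of the variance of the ratio $X/Z$: $$\Phi(X,Z)=\frac{\mathrm{Var}(X)}{\mathbb{E}[Z]^2}+\frac{\mathbb{E}[X]^2}{\mathbb{E}[Z]^4}\mathrm{Var}(Z)-2\frac{\mathbb{E}[X]}{\mathbb{E}[Z]^3}\mathrm{Cov}(X,Z).$$ The paper uses $\Phi(N_\alpha,\overline{C_n})$ as the variance of the CV/MC ratio estimator $N_\alpha/\overline{C_n}$ of $R$; $\mathbb{E}[B]$ is treated as a known constant. *)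

From HB Require Import structures.
From mathcomp Require Import all_boot all_order all_algebra.
From mathcomp Require Import all_classical all_reals all_analysis.
Set Implicit Arguments. Unset Strict Implicit. Unset Printing Implicit Defensive.
Import Order.TTheory GRing.Theory Num.Theory.
Local Open Scope classical_set_scope.
Local Open Scope ring_scope.

Definition sample_mean {d} {T : measurableType d} (n : nat) (R : realType) (X : 'I_n -> T -> R)
  : T -> R := fun w => n%:R^-1 * \sum_(i < n) X i w.

(* Real-valued mean / variance / covariance (finite under finite 2nd moments). *)
Definition Ex {d} {T : measurableType d} {R : realType} (P : probability T R)
  (X : T -> R) : R := fine 'E_P[X].
Definition Var {d} {T : measurableType d} {R : realType} (P : probability T R)
  (X : T -> R) : R := fine 'V_P[X].
Definition Cov {d} {T : measurableType d} {R : realType} (P : probability T R)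
  (X Y : T -> R) : R := fine (covariance P X Y).

(* First-order (delta-method) approximation of Var(X/Z). *)
Definition Phi {d} {T : measurableType d} {R : realType} (P : probability T R)
  (X Z : T -> R) : R :=
  Var P X / Ex P Z ^+ 2 + Ex P X ^+ 2 / Ex P Z ^+ 4 * Var P Z
  - 2 * (Ex P X / Ex P Z ^+ 3) * Cov P X Z.

Definition mutually_independent {d d'} {T : measurableType d}
  {T' : measurableType d'} {R : realType} (P : probability T R) (n : nat)
  (V : 'I_n -> T -> T') : Prop :=
  forall (J : {set 'I_n}) (E : 'I_n -> set T'),
    (forall i, measurable (E i)) ->
    P (\bigcap_(i in [set` J]) (V i @^-1` E i)) =
      (\prod_(i in J) P (V i @^-1` E i))%E.

Definition same_distribution {d d'} {T : measurableType d}
  {T' : measurableType d'} {R : realType} (P : probability T R)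
  (V W : T -> T') : Prop :=
  forall E : set T', measurable E -> P (V @^-1` E) = P (W @^-1` E).

From HB Require Import structures.
From mathcomp Require Import all_boot all_order all_algebra.
From mathcomp Require Import all_classical all_reals all_analysis.
From mathcomp Require Import measurable_realfun ring.
Import Order.TTheory GRing.Theory Num.Theory.
Local Open Scope classical_set_scope.
Local Open Scope ring_scope.

(* Because the triples (A_i, B_i, C_i) are i.i.d., the sample means have the
   expectations of A, B, C, and their covariances are those of A, B, C divided
   by n: the cross terms Cov(X_i, Y_j), i <> j, vanish by independence.  Since
   E[B_n] = E[B], every N_alpha has expectation E[A], so Phi(N_alpha, C_n)
   differs from Phi(A_n, C_n) by a quadratic in alpha with leading coefficient
   Var(B) / (n E[C]^2) > 0, whose vertex is alpha_o'. *)

Section same_distribution.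
Local Open Scope ereal_scope.
Context {d d'} {T : measurableType d} {T' : measurableType d'} {R : realType}
  {P : probability T R} {V W : T -> T'}.
Hypotheses (mV : measurable_fun setT V) (mW : measurable_fun setT W)
  (VW : same_distribution P V W).

Lemma ge0_integral_same_distribution (h : T' -> \bar R) :
  measurable_fun setT h -> (forall y, 0 <= h y) ->
  \int[P]_x h (V x) = \int[P]_x h (W x).
Proof.
move=> mh h0.
have EV := ge0_integral_pushforward mV P measurableT mh (fun y _ => h0 y).
have EW := ge0_integral_pushforward mW P measurableT mh (fun y _ => h0 y).
rewrite !preimage_setT in EV EW; rewrite -[LHS]EV -[RHS]EW.
by apply: eq_measure_integral => S mS _; exact: VW.
Qed.

Lemma integral_same_distribution (h : T' -> \bar R) : measurable_fun setT h ->
  \int[P]_x h (V x) = \int[P]_x h (W x).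
Proof.
move=> mh; rewrite integralE [RHS]integralE.
rewrite (funepos_comp h V) (funeneg_comp h V) (funepos_comp h W) (funeneg_comp h W).
by congr (_ - _); apply: ge0_integral_same_distribution;
  [exact: measurable_funepos|exact: funepos_ge0
  |exact: measurable_funeneg|exact: funeneg_ge0].
Qed.

Lemma Lfun2_same_distribution {f : T' -> R} : measurable_fun setT f ->
  f \o W \in Lfun P 2%:E -> f \o V \in Lfun P 2%:E.
Proof.
move=> mf /andP[_]; rewrite !inE /finite_norm /= => W2.
apply/andP; split; first by rewrite inE; exact: measurableT_comp.
rewrite inE /finite_norm /= unlock.
rewrite (@integral_same_distribution (fun y => `|(f y)%:E| `^ 2)).
  by move: W2; rewrite unlock.
apply: (measurableT_comp (measurable_poweR _)).
by apply/measurable_EFinP; exact: measurableT_comp.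
Qed.

Lemma expectation_same_distribution {f : T' -> R} : measurable_fun setT f ->
  'E_P[f \o V] = 'E_P[f \o W].
Proof.
move=> mf; rewrite unlock.
by apply: (integral_same_distribution (EFin \o f)); exact/measurable_EFinP.
Qed.

Lemma covariance_same_distribution {f g : T' -> R} :
  measurable_fun setT f -> measurable_fun setT g ->
  covariance P (f \o V) (g \o V) = covariance P (f \o W) (g \o W).
Proof.
move=> mf mg; rewrite covariance.unlock !expectation_same_distribution //.
apply: (@expectation_same_distribution (fun y => (f y - _) * (g y - _))%R).
by apply: measurable_funM; apply: measurable_funB => //; exact: measurable_cst.
Qed.

End same_distribution.

Section independent_pair.
Local Open Scope ereal_scope.
Context {d} {T : measurableType d} {R : realType} (P : probability T R) (X Y : T -> R).
Hypotheses (X2 : X \in Lfun P 2%:E) (Y2 : Y \in Lfun P 2%:E).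
Hypothesis XY_indep : forall S1 S2 : set R, measurable S1 -> measurable S2 ->
  P (X @^-1` S1 `&` Y @^-1` S2) = P (X @^-1` S1) * P (Y @^-1` S2).

Let Pfin : P setT \is a fin_num := fin_num_measure P _ measurableT.
Let X1 := Lfun_subset12 Pfin X2.
Let Y1 := Lfun_subset12 Pfin Y2.
Let mX : measurable_fun setT X.
Proof. by move: X2; rewrite inE => /andP[]; rewrite inE. Qed.
Let mY : measurable_fun setT Y.
Proof. by move: Y2; rewrite inE => /andP[]; rewrite inE. Qed.
Let mXY : measurable_fun setT (fun w => (X w, Y w)).
Proof. exact: measurable_fun_pair. Qed.

Let X' : {mfun T >-> R} := HB.pack X (isMeasurableFun.Build _ _ _ _ X mX).
Let Y' : {mfun T >-> R} := HB.pack Y (isMeasurableFun.Build _ _ _ _ Y mY).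
Let XY' : {mfun T >-> (R * R)%type} :=
  HB.pack (fun w => (X w, Y w)) (isMeasurableFun.Build _ _ _ _ _ mXY).

Let prod_distribution_pair S : measurable S ->
  (distribution P X' \x distribution P Y') S = distribution P XY' S.
Proof. by apply: product_measure_unique => S1 S2; exact: XY_indep. Qed.

Let expectation_distribution (Z : {mfun T >-> R}) : (Z : T -> R) \in Lfun P 1 ->
  'E_P[Z] = \int[distribution P Z]_x x%:E.
Proof.
move=> Z1; rewrite unlock; symmetry.
by apply: (integral_distribution (X := Z)) => //; exact/Lfun1_integrable.
Qed.

(* Independence identifies the joint law of (X, Y) with the product of the
   marginal laws, and Fubini then factors E[XY]. *)
Lemma expectationM_indep : 'E_P[(X * Y)%R] = 'E_P[X] * 'E_P[Y].
Proof.
pose h z := (z.1 * z.2)%:E : \bar R.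
have mh : measurable_fun setT h.
  by apply/measurable_EFinP/measurable_funM;
    [exact: measurable_fst|exact: measurable_snd].
have iXY : P.-integrable setT (h \o XY') by exact/Lfun1_integrable/Lfun2_mul_Lfun1.
have mid : measurable_fun setT (@EFin R) by exact/measurable_EFinP.
have iX := integrable_pushforward mX mid (proj1 (Lfun1_integrable _ _) X1) measurableT.
have iY := integrable_pushforward mY mid (proj1 (Lfun1_integrable _ _) Y1) measurableT.
have iprod : (distribution P X' \x distribution P Y').-integrable setT h.
  apply/integrableP; split => //.
  rewrite (eq_measure_integral (distribution P XY')); last first.
    by move=> S mS _; exact: prod_distribution_pair.
  by case/integrableP: (integrable_pushforward mXY mh iXY measurableT).
have -> : 'E_P[(X * Y)%R] = \int[distribution P XY']_z h z.
  by rewrite unlock; symmetry; exact: (integral_distribution (X := XY')).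
rewrite -(eq_measure_integral _ (fun S mS _ => prod_distribution_pair S mS)).
rewrite -(integral12_prod_meas1 iprod) /fubini_F /h /=.
rewrite (expectation_distribution X') // (expectation_distribution Y') //.
have EYfin : \int[distribution P Y']_y y%:E \is a fin_num.
  by rewrite -(expectation_distribution Y') //; exact: expectation_fin_num.
under eq_integral => x _.
  under eq_integral => y _ do rewrite EFinM.
  rewrite (integralZl measurableT iY) -(fineK EYfin).
  over.
by rewrite /= (integralZr measurableT iX) fineK.
Qed.

Lemma Cov_indep : Cov P X Y = 0%R.
Proof.
rewrite /Cov covarianceE //; last exact: Lfun2_mul_Lfun1.
by rewrite expectationM_indep subee // fin_numM // expectation_fin_num.
Qed.

End independent_pair.

Section covariance_algebra.
Context {d} {T : measurableType d} {R : realType} (P : probability T R).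
Local Notation L2 := (Lfun P 2%:E).

Let Pfin : (P setT \is a fin_num)%E := fin_num_measure P _ measurableT.
Let L2_L1 (X : T -> R) : X \in L2 -> X \in Lfun P 1.
Proof. exact: Lfun_subset12. Qed.
Let le12 : 1 <= 2 :> R. Proof. by rewrite ler1n. Qed.
Local Hint Resolve L2_L1 le12 : core.

Lemma Var_Cov (X : T -> R) : Var P X = Cov P X X.
Proof. by []. Qed.

Lemma CovC (X Y : T -> R) : Cov P X Y = Cov P Y X.
Proof. by rewrite /Cov covarianceC. Qed.

Lemma CovDl (X Y Z : T -> R) : X \in L2 -> Y \in L2 -> Z \in L2 ->
  Cov P (X \+ Y) Z = Cov P X Z + Cov P Y Z.
Proof.
move=> X2 Y2 Z2; rewrite /Cov covarianceDl // fineD //;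
  by apply: covariance_fin_num; auto; exact: Lfun2_mul_Lfun1.
Qed.

Lemma CovZl a (X Y : T -> R) : X \in L2 -> Y \in L2 ->
  Cov P (a \o* X) Y = a * Cov P X Y.
Proof.
move=> X2 Y2; have XY1 := Lfun2_mul_Lfun1 X2 Y2.
have [X1 Y1] := (L2_L1 _ X2, L2_L1 _ Y2).
by rewrite /Cov covarianceZl // fineM // covariance_fin_num.
Qed.

Lemma Lfun2_sum {I : Type} (s : seq I) {X : I -> T -> R} :
  (forall i, X i \in L2) -> (fun w => \sum_(i <- s) X i w) \in L2.
Proof. by move=> X2; rewrite -fct_sumE; apply: rpred_sum => i _; exact: X2. Qed.

Lemma Cov_suml {I : Type} (s : seq I) (X : I -> T -> R) (Z : T -> R) :
  (forall i, X i \in L2) -> Z \in L2 ->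
  Cov P (fun w => \sum_(i <- s) X i w) Z = \sum_(i <- s) Cov P (X i) Z.
Proof.
move=> X2 Z2; elim: s => [|i s IH].
  under eq_fun do rewrite big_nil.
  by rewrite big_nil /Cov -/(cst 0) covariance_cst_l.
under eq_fun do rewrite big_cons.
by rewrite big_cons -IH -CovDl //; exact: Lfun2_sum.
Qed.

Lemma Cov_sumr {I : Type} (s : seq I) (X : I -> T -> R) (Z : T -> R) :
  (forall i, X i \in L2) -> Z \in L2 ->
  Cov P Z (fun w => \sum_(i <- s) X i w) = \sum_(i <- s) Cov P Z (X i).
Proof.
by move=> X2 Z2; rewrite CovC Cov_suml //; apply: eq_bigr => i _; exact: CovC.
Qed.

Lemma Ex_sum {I : Type} (s : seq I) (X : I -> T -> R) :
  (forall i, X i \in L2) ->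
  Ex P (fun w => \sum_(i <- s) X i w) = \sum_(i <- s) Ex P (X i).
Proof.
move=> X2; elim: s => [|i s IH].
  under eq_fun do rewrite big_nil.
  by rewrite big_nil /Ex -/(cst 0) expectation_cst.
under eq_fun do rewrite big_cons.
have [Xi1 S1] := (L2_L1 _ (X2 i), L2_L1 _ (Lfun2_sum s X2)).
rewrite big_cons -IH /Ex -/(X i \+ _)%R expectationD //.
by rewrite fineD // expectation_fin_num.
Qed.

Lemma sample_meanE n (X : 'I_n -> T -> R) :
  sample_mean X = n%:R^-1 \o* (fun w => \sum_(i < n) X i w).
Proof. by apply/funext => w; rewrite /sample_mean /= mulrC. Qed.

Lemma Lfun2_sample_mean n (X : 'I_n -> T -> R) : (forall i, X i \in L2) ->
  sample_mean X \in L2.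
Proof.
by move=> X2; rewrite sample_meanE; apply: Lfun_scale => //; exact: Lfun2_sum.
Qed.

Lemma Ex_sample_mean n (X : 'I_n -> T -> R) : (forall i, X i \in L2) ->
  Ex P (sample_mean X) = n%:R^-1 * \sum_(i < n) Ex P (X i).
Proof.
move=> X2; have S1 : (fun w => \sum_(i < n) X i w) \in Lfun P 1.
  by apply: L2_L1; exact: Lfun2_sum.
by rewrite /Ex sample_meanE expectationZl // fineM ?expectation_fin_num // -Ex_sum.
Qed.

Lemma Cov_sample_mean n (X Y : 'I_n -> T -> R) :
  (forall i, X i \in L2) -> (forall i, Y i \in L2) ->
  Cov P (sample_mean X) (sample_mean Y) =
  n%:R^-1 * (n%:R^-1 * \sum_(i < n) \sum_(j < n) Cov P (X i) (Y j)).
Proof.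
move=> X2 Y2; have SX := Lfun2_sum (index_enum 'I_n) X2.
have SY := Lfun2_sum (index_enum 'I_n) Y2.
rewrite !sample_meanE CovZl //; last exact: Lfun_scale.
rewrite CovC CovZl // CovC Cov_suml //.
by congr (_ * (_ * _)); apply: eq_bigr => i _; exact: Cov_sumr.
Qed.

End covariance_algebra.

Section control_variate.
Context {d} {T : measurableType d} {R : realType} (P : probability T R).
Local Notation L2 := (Lfun P 2%:E).
Variables (X Y : T -> R) (c a : R).
Hypotheses (X2 : X \in L2) (Y2 : Y \in L2).

Let Pfin : (P setT \is a fin_num)%E := fin_num_measure P _ measurableT.
Let le12 : 1 <= 2 :> R. Proof. by rewrite ler1n. Qed.
Let X1 : X \in Lfun P 1. Proof. exact: Lfun_subset12. Qed.
Let Y1 : Y \in Lfun P 1. Proof. exact: Lfun_subset12. Qed.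

Let control_variateE : (fun w => X w + a * (c - Y w)) = X \+ a \o* (cst c \- Y).
Proof. by apply/funext => w /=; rewrite mulrC. Qed.

Let cY2 : cst c \- Y \in L2.
Proof. by apply: rpredB => //; exact: Lfun_cst. Qed.

Let acY2 : a \o* (cst c \- Y) \in L2.
Proof. exact: Lfun_scale. Qed.

Lemma Lfun2_control_variate : (fun w => X w + a * (c - Y w)) \in L2.
Proof. by rewrite control_variateE rpredD. Qed.

Lemma Ex_control_variate :
  Ex P (fun w => X w + a * (c - Y w)) = Ex P X + a * (c - Ex P Y).
Proof.
have cY1 : cst c \- Y \in Lfun P 1 by exact: Lfun_subset12.
rewrite control_variateE /Ex expectationD //; last exact: Lfun_subset12.
rewrite expectationZl // expectationB ?Lfun_cst // expectation_cst.
rewrite -(fineK (expectation_fin_num X1)) -(fineK (expectation_fin_num Y1)).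
by rewrite -EFinB -EFinM -EFinD /= mulrC.
Qed.

Lemma Cov_control_variate_l (Z : T -> R) : Z \in L2 ->
  Cov P (fun w => X w + a * (c - Y w)) Z = Cov P X Z - a * Cov P Y Z.
Proof.
move=> Z2; rewrite control_variateE CovDl // CovZl // -mulrN; congr (_ + _ * _).
rewrite /Cov covarianceBl ?Lfun_cst //.
by rewrite covariance_cst_l sub0e fineN.
Qed.

Lemma Cov_control_variate_r (Z : T -> R) : Z \in L2 ->
  Cov P Z (fun w => X w + a * (c - Y w)) = Cov P Z X - a * Cov P Z Y.
Proof. by move=> Z2; rewrite CovC Cov_control_variate_l // !(CovC _ Z). Qed.

Lemma Phi_control_variate (Z : T -> R) : Z \in L2 ->
  Ex P Y = c -> Ex P Z != 0 ->
  Phi P (fun w => X w + a * (c - Y w)) Z = Phi P X Z +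
    (a ^+ 2 * Var P Y - 2 * a * (Cov P X Y - Ex P X / Ex P Z * Cov P Y Z))
    / Ex P Z ^+ 2.
Proof.
move=> Z2 EY EZ0; rewrite /Phi Ex_control_variate EY subrr mulr0 addr0.
rewrite !Var_Cov !Cov_control_variate_l ?Lfun2_control_variate //.
rewrite !Cov_control_variate_r // (CovC P Y X).
by field; rewrite EZ0.
Qed.

End control_variate.

Lemma mutually_independent_pair {d d'} {T : measurableType d}
    {T' : measurableType d'} {R : realType} {P : probability T R} {n}
    {V : 'I_n -> T -> T'} : mutually_independent P V ->
  forall i j, i != j -> forall S1 S2 : set T', measurable S1 -> measurable S2 ->
  P (V i @^-1` S1 `&` V j @^-1` S2) = (P (V i @^-1` S1) * P (V j @^-1` S2))%E.
Proof.
move=> V_indep i j ij S1 S2 mS1 mS2.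
pose S k := if k == i then S1 else if k == j then S2 else setT.
have mS k : measurable (S k) by rewrite /S; case: ifP => _ //; case: ifP.
have ji : (j == i) = false by rewrite eq_sym (negbTE ij).
have <- : \bigcap_(k in [set` [set i; j]%SET]) V k @^-1` S k =
          V i @^-1` S1 `&` V j @^-1` S2.
  apply/seteqP; split => w.
    by move=> Sw; split; [move: (Sw i)|move: (Sw j)];
      rewrite /S ?ji eqxx; apply; rewrite /= !inE eqxx ?orbT.
  by move=> [S1w S2w] k; rewrite /= !inE => /orP[]/eqP->; rewrite /S ?ji eqxx.
rewrite V_indep // big_setU1 /=; last by rewrite inE eq_sym ji.
by rewrite big_set1 /S eqxx ji eqxx.
Qed.

Section iid_sample_mean.
Context {d d'} {T : measurableType d} {T' : measurableType d'} {R : realType}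
  {P : probability T R} {n : nat} {V : 'I_n -> T -> T'} {V0 : T -> T'}.
Hypotheses (mV : forall i, measurable_fun setT (V i)) (mV0 : measurable_fun setT V0).
Hypotheses (V_indep : mutually_independent P V)
  (V_id : forall i, same_distribution P (V i) V0) (n_gt0 : (0 < n)%N).
Context {p q : T' -> R}.
Hypotheses (mp : measurable_fun setT p) (mq : measurable_fun setT q).
Hypotheses (p2 : p \o V0 \in Lfun P 2%:E) (q2 : q \o V0 \in Lfun P 2%:E).

Let pV2 i : p \o V i \in Lfun P 2%:E.
Proof. exact: (Lfun2_same_distribution (mV i) mV0 (V_id i) mp). Qed.

Let qV2 i : q \o V i \in Lfun P 2%:E.
Proof. exact: (Lfun2_same_distribution (mV i) mV0 (V_id i) mq). Qed.

Lemma Lfun2_sample_mean_iid : sample_mean (fun i => p \o V i) \in Lfun P 2%:E.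
Proof. exact: Lfun2_sample_mean. Qed.

Let n0 : n%:R != 0 :> R.
Proof. by rewrite pnatr_eq0 -lt0n. Qed.

Lemma Ex_sample_mean_iid : Ex P (sample_mean (fun i => p \o V i)) = Ex P (p \o V0).
Proof.
rewrite Ex_sample_mean // (eq_bigr (fun=> Ex P (p \o V0))) => [|i _].
  by rewrite sumr_const card_ord -[X in _ * X]mulr_natl mulKf.
by rewrite /Ex (expectation_same_distribution (mV i) mV0 (V_id i) mp).
Qed.

Lemma Cov_sample_mean_iid :
  Cov P (sample_mean (fun i => p \o V i)) (sample_mean (fun i => q \o V i)) =
  Cov P (p \o V0) (q \o V0) / n%:R.
Proof.
rewrite Cov_sample_mean //.
have Cov_offdiag i j : j != i -> Cov P (p \o V i) (q \o V j) = 0.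
  move=> ji; apply: Cov_indep => // S1 S2 mS1 mS2.
  have mpS1 : measurable (p @^-1` S1) by rewrite -[_ @^-1` _]setTI; exact: mp.
  have mqS2 : measurable (q @^-1` S2) by rewrite -[_ @^-1` _]setTI; exact: mq.
  by apply: (mutually_independent_pair V_indep i j _ _ _ mpS1 mqS2); rewrite eq_sym.
rewrite (eq_bigr (fun=> Cov P (p \o V0) (q \o V0))) => [|i _].
  by rewrite sumr_const card_ord -[X in _ * (_ * X)]mulr_natl mulKf // mulrC.
rewrite (bigD1 i) //= big1 ?addr0; last exact: Cov_offdiag.
by rewrite /Cov (covariance_same_distribution (mV i) mV0 (V_id i) mp mq).
Qed.

End iid_sample_mean.

Lemma shifted_square_unique_argmin {R : realDomainType} (F : R -> R) (m s : R) :
  0 < s -> (forall a, F a = F m + s * (a - m) ^+ 2) ->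
  (forall a, F m <= F a) /\ (forall m', (forall a, F m' <= F a) -> m' = m).
Proof.
move=> s_gt0 FE; split=> [a|m' m'_min].
  by rewrite [leRHS]FE lerDl mulr_ge0 ?sqr_ge0 ?ltW.
have := m'_min m; rewrite [leLHS]FE gerDl pmulr_rle0 // => sqr_le0.
by apply/eqP; rewrite -subr_eq0 -sqrf_eq0 eq_le sqr_le0 sqr_ge0.
Qed.

Theorem mainTheorem3 (d : measure_display) (T : measurableType d)
  (R : realType) (P : probability T R)
  (A B C : {RV P >-> R})
  (hA2 : (A : T -> R) \in Lfun P 2) (hB2 : (B : T -> R) \in Lfun P 2)
  (hC2 : (C : T -> R) \in Lfun P 2)
  (hVB : 0 < Var P B) (hEA : Ex P A != 0) (hEC : Ex P C != 0)
  (n : nat) (hn : (0 < n)%N)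
  (Ai Bi Ci : 'I_n -> {RV P >-> R})
  (hind : mutually_independent P (fun i w => (Ai i w, Bi i w, Ci i w)))
  (hid : forall i, same_distribution P (fun w => (Ai i w, Bi i w, Ci i w))
                                       (fun w => (A w, B w, C w))) :
  let Rr := Ex P A / Ex P C in
  let N := fun alpha : R => fun w : T =>
    sample_mean (fun i => (Ai i : T -> R)) w
    + alpha * (Ex P B - sample_mean (fun i => (Bi i : T -> R)) w) in
  let Cbar := sample_mean (fun i => (Ci i : T -> R)) in
  let alpha_o := (Cov P A B - Rr * Cov P B C) / Var P B in
  (forall alpha, Phi P (N alpha_o) Cbar <= Phi P (N alpha) Cbar) /\
  (forall alpha', (forall alpha, Phi P (N alpha') Cbar <= Phi P (N alpha) Cbar) ->
     alpha' = alpha_o).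
Proof.
move=> Rr N Cbar alpha_o.
pose V i w := (Ai i w, Bi i w, Ci i w); pose V0 w := (A w, B w, C w).
have mV i : measurable_fun setT (V i).
  by do 2?apply: measurable_fun_pair; exact: measurable_funP.
have mV0 : measurable_fun setT V0.
  by do 2?apply: measurable_fun_pair; exact: measurable_funP.
have mA : measurable_fun setT (fun z : R * R * R => z.1.1).
  exact: measurableT_comp measurable_fst measurable_fst.
have mB : measurable_fun setT (fun z : R * R * R => z.1.2).
  exact: measurableT_comp measurable_snd measurable_fst.
have mC : measurable_fun setT (fun z : R * R * R => z.2) := measurable_snd.
pose Abar := sample_mean (fun i => (Ai i : T -> R)).
pose Bbar := sample_mean (fun i => (Bi i : T -> R)).
have Abar2 : Abar \in Lfun P 2%:E := Lfun2_sample_mean_iid mV mV0 hid mA hA2.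
have Bbar2 : Bbar \in Lfun P 2%:E := Lfun2_sample_mean_iid mV mV0 hid mB hB2.
have Cbar2 : Cbar \in Lfun P 2%:E := Lfun2_sample_mean_iid mV mV0 hid mC hC2.
have EAbar : Ex P Abar = Ex P A := Ex_sample_mean_iid mV mV0 hid hn mA hA2.
have EBbar : Ex P Bbar = Ex P B := Ex_sample_mean_iid mV mV0 hid hn mB hB2.
have ECbar : Ex P Cbar = Ex P C := Ex_sample_mean_iid mV mV0 hid hn mC hC2.
have CovAB : Cov P Abar Bbar = Cov P A B / n%:R :=
  Cov_sample_mean_iid mV mV0 hind hid hn mA mB hA2 hB2.
have VarB : Var P Bbar = Var P B / n%:R :=
  Cov_sample_mean_iid mV mV0 hind hid hn mB mB hB2 hB2.
have CovBC : Cov P Bbar Cbar = Cov P B C / n%:R :=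
  Cov_sample_mean_iid mV mV0 hind hid hn mB mC hB2 hC2.
have n0 : n%:R != 0 :> R by rewrite pnatr_eq0 -lt0n.
have curvature_gt0 : 0 < Var P B / (n%:R * Ex P C ^+ 2).
  by rewrite divr_gt0 // mulr_gt0 ?ltr0n // exprn_even_gt0.
apply: (shifted_square_unique_argmin (fun a => Phi P (N a) Cbar) _ _ curvature_gt0).
move=> a; rewrite /N !Phi_control_variate ?ECbar //.
rewrite VarB CovAB CovBC EAbar /alpha_o /Rr.
by field; rewrite hEC n0 gt_eqF.
Qed.
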